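(* Let $G$ be a finite group which is a $2$-closed group. Then the center $Z(G)$ of $G$ is cyclic.
   Context: Permutations act on the right; $\alpha^g$ denotes the image of $\alpha$ under $g$. For a set $\Omega$ and $G\leq{\rm Sym}(\Omega)$, the $2$-closure of $G$ on $\Omega$ is $G^{(2),\Omega}=\{\theta\in{\rm Sym}(\Omega)\mid \forall \alpha,\beta\in\Omega\ \exists g\in G:\ \alpha^\theta=\alpha^g,\ \beta^\theta=\beta^g\}$. $G$ is called $2$-closed on $\Omega$ if $G=G^{(2),\Omega}$. An abstract group $G$ is called a $2$-closed group if $H=H^{(2),\Omega}$ for every set $\Omega$ and every subgroup $H\leq{\rm Sym}(\Omega)$ with $H\cong G$ (i.e. $G$ is $2$-closed in all of its faithful permutation representations). *)

From mathcomp Require Import all_boot all_fingroup all_solvable.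
Set Implicit Arguments. Unset Strict Implicit. Unset Printing Implicit Defensive.
Local Open Scope group_scope.

(* A faithful permutation representation of G on an arbitrary set (type) T:
   an injective homomorphism g |-> act g from G into Sym(T), written as a
   right action (alpha^(gh) = (alpha^g)^h).  Its image H is exactly an
   arbitrary subgroup of Sym(T) isomorphic to G. *)
Definition faithful_perm_rep (gT : finGroupType) (G : {group gT})
    (T : Type) (act : gT -> T -> T) : Prop :=
  [/\ forall x, act 1 x = x,
      (forall g h x, g \in G -> h \in G -> act (g * h) x = act h (act g x))
    & {in G &, injective act}].

(* H = act(G) is 2-closed on T: every permutation theta of T which, on every
   pair of points, agrees with some element of H, lies in H.
   (The inclusion H <= H^(2) always holds.) *)
Definition two_closed_on (gT : finGroupType) (G : {group gT})
    (T : Type) (act : gT -> T -> T) : Prop :=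
  forall theta : T -> T, bijective theta ->
    (forall a b : T, exists2 g, g \in G & theta a = act g a /\ theta b = act g b) ->
    exists2 g, g \in G & theta = act g.

Definition two_closed_group (gT : finGroupType) (G : {group gT}) : Prop :=
  forall (T : Type) (act : gT -> T -> T),
    faithful_perm_rep G act -> two_closed_on G act.

(* If 'Z(G) is not cyclic, it contains elements a, b of prime order p with
   b \notin <[a]>; then <[a]>, <[b]> and <[a * b]> are central and
   <[b]> :&: <[a * b]> = 1.  Let G act by right multiplication on the disjoint
   union of the coset spaces of these three subgroups; the action is faithful.
   The permutation that multiplies by b on the first coset space and fixes the
   other two agrees, on any two points, with one of b, a * b or 1 (two points
   meet at most two of the three orbits), yet it is not induced by any element
   of G because b \notin <[a]>. *)
From mathcomp Require Import all_boot all_fingroup all_solvable.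
Set Implicit Arguments. Unset Strict Implicit. Unset Printing Implicit Defensive.
Local Open Scope group_scope.

Section CosetSumAction.

Variables (gT : finGroupType) (A B C : {group gT}).

Definition coset_sum := (coset_of A + coset_of B + coset_of C)%type.

Definition coset_sum_mul (x : coset_of A) (y : coset_of B) (z : coset_of C)
    (t : coset_sum) : coset_sum :=
  match t with
  | inl (inl X) => inl (inl (X * x))
  | inl (inr Y) => inl (inr (Y * y))
  | inr Z => inr (Z * z)
  end.

Definition coset_sum_act (g : gT) : coset_sum -> coset_sum :=
  coset_sum_mul (coset A g) (coset B g) (coset C g).

Lemma coset_sum_mul_inj x y z x' y' z' :
  coset_sum_mul x y z = coset_sum_mul x' y' z' -> [/\ x = x', y = y' & z = z'].
Proof.
move=> E; have := congr1 (fun f => f (inr 1)) E.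
have := congr1 (fun f => f (inl (inr 1))) E.
have := congr1 (fun f => f (inl (inl 1))) E.
by rewrite /= !mul1g => -[->] [->] [->].
Qed.

Lemma coset_sum_mul_bij x y z : bijective (coset_sum_mul x y z).
Proof.
exists (coset_sum_mul x^-1 y^-1 z^-1).
  by case=> [[X|Y]|Z] /=; rewrite mulgK.
by case=> [[X|Y]|Z] /=; rewrite mulgKV.
Qed.

Variable G : {group gT}.
Hypotheses (nAG : G \subset 'N(A)) (nBG : G \subset 'N(B)).
Hypothesis nCG : G \subset 'N(C).

Lemma coset_sum_act_faithful :
  A :&: B :&: C = 1 -> faithful_perm_rep G coset_sum_act.
Proof.
move=> tiABC; split.
- by case=> [[X|Y]|Z]; rewrite /coset_sum_act !morph1 /= mulg1.
- move=> g h [[X|Y]|Z] Gg Gh; rewrite /coset_sum_act /= morphM ?mulgA //;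
    by [apply: (subsetP nAG) | apply: (subsetP nBG) | apply: (subsetP nCG)].
move=> g h Gg Gh /coset_sum_mul_inj[eqA eqB eqC].
have mulgV_mem (D : {group gT}) :
    G \subset 'N(D) -> coset D g = coset D h -> g * h^-1 \in D.
  move/subsetP=> nDG /(rcoset_kercosetP (nDG g Gg) (nDG h Gh)).
  by rewrite mem_rcoset.
have: g * h^-1 \in A :&: B :&: C by rewrite !inE !mulgV_mem.
by rewrite tiABC => /set1P/eqP; rewrite mulg_eq1 invgK => /eqP.
Qed.

Lemma coset_sum_act_not_two_closed a b :
    a \in A -> b \in B -> a * b \in C -> a \in G -> b \in G ->
    B :&: C = 1 -> b \notin A ->
  ~ two_closed_on G coset_sum_act.
Proof.
move=> Aa Bb Cab Ga Gb tiBC notAb tcG.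
pose theta := coset_sum_mul (coset A b) 1 1.
have Bb1 : coset B b = 1 by rewrite coset_id.
have Cab1 : coset C (a * b) = 1 by rewrite coset_id.
have Aab : coset A (a * b) = coset A b by rewrite coset_kerl.
have Gab : a * b \in G by rewrite groupM.
(* theta agrees with b off the C-orbit, with a * b off the B-orbit and
   with 1 off the A-orbit *)
have theta_2agree (t t' : coset_sum) : exists2 g, g \in G &
    theta t = coset_sum_act g t /\ theta t' = coset_sum_act g t'.
  case: t t' => [[X|Y]|Z] [[X'|Y']|Z']; rewrite /coset_sum_act /=; first
    [ by exists b; rewrite ?Bb1
    | by exists (a * b); rewrite ?Aab ?Cab1
    | by exists 1; rewrite // !morph1 ].
have [g Gg /coset_sum_mul_inj[Abg /esym Bg /esym Cg]] :=
  tcG theta (coset_sum_mul_bij _ _ _) theta_2agree.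
have: g \in B :&: C.
  rewrite inE (coset_idr (subsetP nBG g Gg) Bg).
  exact: coset_idr (subsetP nCG g Gg) Cg.
rewrite tiBC => /set1P g1; move: Abg; rewrite g1 morph1.
by move/(coset_idr (subsetP nAG b Gb)); apply/negP.
Qed.

End CosetSumAction.

Lemma not_two_closed_of_normal_triple (gT : finGroupType) (G A B C : {group gT})
    a b :
    A <| G -> B <| G -> C <| G -> a \in A -> b \in B -> a * b \in C ->
    B :&: C = 1 -> b \notin A ->
  ~ two_closed_group G.
Proof.
move=> /andP[sAG nAG] /andP[sBG nBG] /andP[_ nCG] Aa Bb Cab tiBC notAb tcG.
have tiABC : A :&: B :&: C = 1 by rewrite -setIA tiBC setIg1.
apply: (coset_sum_act_not_two_closed nAG nBG nCG Aa Bb Cab) => //.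
- exact: subsetP sAG a Aa.
- exact: subsetP sBG b Bb.
exact/tcG/coset_sum_act_faithful.
Qed.

Lemma noncyclic_abelian_pElem2 (gT : finGroupType) (H : {group gT}) :
  abelian H -> ~~ cyclic H -> exists p (E : {group gT}), E \in 'E_p^2(H).
Proof.
move=> abH; rewrite abelian_rank1_cyclic // -ltnNge.
have [p _ ->] := rank_witness H.
by case/p_rank_geP=> E; exists p, E.
Qed.

Lemma pElem2_cycle_triple (gT : finGroupType) p (H E : {group gT}) :
    E \in 'E_p^2(H) ->
  exists a b, [/\ a \in E, b \in E, b \notin <[a]> & <[b]> :&: <[a * b]> = 1].
Proof.
move=> EpE; have p_pr := pnElem_prime EpE; have oE := card_pnElem EpE.
case/pnElemP: EpE => _ abelE _.
have p_gt1 := prime_gt1 p_pr.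
have ntE : E :!=: 1.
  by rewrite trivg_card1 oE -{2}(expn0 p) eqn_exp2l.
have [a Ea nta] := trivgPn _ ntE.
have: ~~ (E \subset <[a]>).
  apply/negP => /subset_leq_card.
  rewrite oE -orderE (abelem_order_p abelE Ea nta).
  by rewrite leqNgt -{1}(expn1 p) ltn_exp2l.
case/subsetPn=> b Eb notab; exists a, b; split=> //.
have prime_order x : x \in E -> x != 1 -> prime #|<[x]>|.
  by move=> Ex ntx; rewrite -orderE (abelem_order_p abelE Ex ntx).
have ntb : b != 1 by apply: contraNneq notab => ->; apply: group1.
have tiab : <[a]> :&: <[b]> = 1.
  by rewrite setIC prime_TIg ?prime_order ?cycle_subG.
have notba : a \notin <[b]>.
  by apply: contra nta => ba; apply/eqP/set1gP; rewrite -tiab inE cycle_id.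
have ntab : a * b != 1.
  apply: contra notab; rewrite -eq_invg_mul => /eqP <-.
  by rewrite groupV cycle_id.
rewrite setIC prime_TIg ?prime_order ?groupM // cycle_subG.
by rewrite groupMr ?cycle_id.
Qed.

Theorem theorem1 (gT : finGroupType) (G : {group gT}) :
  two_closed_group G -> cyclic 'Z(G).
Proof.
move=> tcG; apply: contraPT tcG => ncycZ.
have [p [E EpE]] := noncyclic_abelian_pElem2 (center_abelian G) ncycZ.
have [a [b [Ea Eb notab tiBC]]] := pElem2_cycle_triple EpE.
have sEZ : E \subset 'Z(G) by case/pnElemP: EpE.
have nsZ x : x \in E -> <[x]> <| G.
  by move=> Ex; apply: sub_center_normal; rewrite cycle_subG (subsetP sEZ).
exact: (not_two_closed_of_normal_triple (nsZ a Ea) (nsZ b Eb)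
  (nsZ _ (groupM Ea Eb)) (cycle_id a) (cycle_id b) (cycle_id _) tiBC notab).
Qed.
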